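(* Let $m \ge 2$, let $\varepsilon \le \frac{1}{2^{3m}\cdot 4m}$ be a power of 2, and let $\mathcal{G} = \{2^{-i}\varepsilon j : i \in \mathbb{Z},\ j \in \{1,\dots,2/\varepsilon^2 - 1\}\} \cap (0,1)$. Then for any $0 < q < 1$ there exists $z \in \mathcal{G}$ with $1.5\varepsilon q \le q - z \le 2\varepsilon z$. *)

From HB Require Import structures.
From mathcomp Require Import all_boot all_order all_algebra.
From mathcomp Require Import reals.
Set Implicit Arguments. Unset Strict Implicit. Unset Printing Implicit Defensive.
Import Order.TTheory GRing.Theory Num.Theory.
Local Open Scope ring_scope.

Definition is_pow2 (R : realType) (eps : R) : Prop :=
  exists k : int, eps = 2 ^ k.

Definition in_grid (R : realType) (eps z : R) : Prop :=
  (exists (i : int) (j : nat),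
      (1 <= j)%N /\ (j%:R : R) <= 2 / eps ^+ 2 - 1 /\ z = 2 ^ (- i) * eps * j%:R)
  /\ 0 < z < 1.

From HB Require Import structures.
From mathcomp Require Import all_boot all_order all_algebra.
From mathcomp Require Import reals.
From mathcomp Require Import lra zify.
Import Order.TTheory GRing.Theory Num.Theory.
Local Open Scope ring_scope.

(* Put q into its dyadic block: 2^-i <= q/4 < 2^(1-i).  Then the grid points
   2^-i eps j have spacing 2^-i eps <= eps q / 4, so rounding q (1 - 3/2 eps)
   down to the grid loses at most eps q / 4, which keeps q - z between
   3/2 eps q and 7/4 eps q <= 2 eps z; the index j stays below 8 / eps, well
   within 2 / eps^2. *)

Lemma inv_pow2_3m_mul_4m_le (R : numFieldType) (m : nat) :
  (2 <= m)%N -> (2 ^+ (3 * m) * (4 * m)%:R)^-1 <= 1 / 14 :> R.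
Proof.
move=> m2; have scale_ge : (14 <= 2 ^ (3 * m) * (4 * m))%N.
  apply: (@leq_mul 2 7); last lia.
  by rewrite (@leq_exp2l 2 1) //; lia.
rewrite mul1r -natrX -natrM lef_pV2 ?posrE ?ltr0n ?ler_nat //.
exact: leq_trans scale_ge.
Qed.

Section ArchimedeanRounding.

Variable R : archiRealFieldType.

Lemma exists_dyadic_bracket (x : R) :
  0 < x -> x < 1 -> exists n : nat, 2 ^- n.+1 <= x < 2 ^- n.
Proof.
move=> x0 x1; pose P n := (2 : R) ^- n <= x.
have [n Pn] : exists n, P n.
  exists (Num.truncn x^-1).+1.
  rewrite /P -[x in _ <= x]invrK lef_pV2 ?posrE ?invr_gt0 ?exprn_gt0 //.
  apply/ltW/(lt_le_trans (truncnS_gt _)).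
  by rewrite -natrX ler_nat; exact: ltnW (ltn_expl _ _).
case: (ex_minnP (ex_intro P n Pn)) => -[|k] Pk k_min.
  by move: Pk; rewrite /P expr0 invr1 leNgt x1.
exists k; rewrite [_ <= x]Pk ltNge /=.
by apply/negP => /k_min; rewrite ltnn.
Qed.

Lemma exists_nat_floor_mul (s y : R) :
  0 < s -> s <= y -> exists2 j : nat, (0 < j)%N & j%:R * s <= y < j.+1%:R * s.
Proof.
move=> s0 sy; have ys0 : 0 <= y / s by rewrite divr_ge0 // (le_trans (ltW s0)).
exists (Num.truncn (y / s)); first by rewrite truncn_gt0 ler_pdivlMr // mul1r.
by rewrite -ler_pdivlMr // -ltr_pdivrMr // truncn_itv.
Qed.

End ArchimedeanRounding.

Section RoundingError.

Variable R : realFieldType.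

Lemma grid_index_le (eps j : R) :
  0 < eps -> eps <= 1 / 14 -> j * eps < 8 -> j <= 2 / eps ^+ 2 - 1.
Proof.
move=> eps_gt0 eps_le jeps; have eps2_gt0 : 0 < eps ^+ 2 by rewrite exprn_gt0.
rewrite lerBrDr ler_pdivlMr //.
have : j * eps ^+ 2 <= 8 * eps by rewrite exprSr mulrA ltW // ltr_pM2r.
have : eps ^+ 2 <= eps / 14 by rewrite expr2 ler_pM2l // -div1r.
lra.
Qed.

Lemma round_down_error_bounds (eps q s z : R) :
  0 < eps -> eps <= 1 / 14 -> 0 < q -> s <= eps * q / 4 -> z <= q * (1 - 3 / 2 * eps) < z + s ->
  3 / 2 * eps * q <= q - z /\ q - z <= 2 * eps * z.
Proof.
move=> eps_gt0 eps_le q0 s_le /andP[z_le z_gt].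
have epsq_le : eps * q <= q / 14 by rewrite mulrC ler_pM2l // -div1r.
split; first lra.
have z_ge : 7 / 8 * q <= z by lra.
have : eps * (7 / 8 * q) <= eps * z by rewrite ler_pM2l.
lra.
Qed.

End RoundingError.

Theorem claim12 (R : realType) (m : nat) (eps : R) :
  (2 <= m)%N ->
  eps <= (2 ^+ (3 * m) * (4 * m)%:R)^-1 ->
  is_pow2 eps ->
  forall q : R, 0 < q < 1 ->
  exists z : R, in_grid eps z /\ 3 / 2 * eps * q <= q - z /\ q - z <= 2 * eps * z.
Proof.
move=> m2 eps_le [k eps_pow2] q /andP[q0 q1].
have eps_gt0 : 0 < eps by rewrite eps_pow2 exprz_gt0.
have eps_small : eps <= 1 / 14 := le_trans eps_le (inv_pow2_3m_mul_4m_le _ _ m2).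
have [n /andP[t_le t_gt]] : exists n : nat, 2 ^- n.+1 <= q / 4 < 2 ^- n.
  by apply: exists_dyadic_bracket; lra.
set t : R := 2 ^- n.+1 in t_le.
have t_gt0 : 0 < t by rewrite invr_gt0 exprn_gt0.
have epsq_gt0 : 0 < eps * q by rewrite mulr_gt0.
have epsq_le : eps * q <= q / 14 by rewrite mulrC ler_pM2l // -div1r.
have q_lt : q < 8 * t.
  have t_double : 2 * t = 2 ^- n by rewrite /t exprS invfM mulrA divff ?mul1r ?pnatr_eq0.
  lra.
have step_le : t * eps <= eps * q / 4 by rewrite mulrC -mulrA ler_pM2l.
have [j j_gt0 /andP[j_le j_gt]] :
    exists2 j : nat, (0 < j)%N & j%:R * (t * eps) <= q * (1 - 3 / 2 * eps) < j.+1%:R * (t * eps).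
  by apply: exists_nat_floor_mul; [rewrite mulr_gt0 | lra].
have [err_lo err_hi] : 3 / 2 * eps * q <= q - t * eps * j%:R /\
                       q - t * eps * j%:R <= 2 * eps * (t * eps * j%:R).
  by apply: round_down_error_bounds step_le _ => //; rewrite -natr1 in j_gt; apply/andP; lra.
exists (t * eps * j%:R); split=> //; split.
  exists n.+1, j; split=> //; split; last by rewrite -exprnN.
  apply: grid_index_le => //; rewrite -(ltr_pM2r t_gt0); lra.
have jR_gt0 : 0 < j%:R :> R by rewrite ltr0n.
by apply/andP; split; [rewrite !mulr_gt0 | lra].
Qed.
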